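(* In the Com-IC model, if $q_{\mathcal{B}|\mathcal{A}}=q_{\mathcal{B}|\emptyset}$ then, for any fixed $\mathcal{B}$-seed set $S_\mathcal{B}$, the probability distribution of the final set of $\mathcal{B}$-adopted nodes is the same for every $\mathcal{A}$-seed set $S_\mathcal{A}$ (including $S_\mathcal{A}=\emptyset$). Symmetrically, if $q_{\mathcal{A}|\mathcal{B}}=q_{\mathcal{A}|\emptyset}$, the distribution of the final set of $\mathcal{A}$-adopted nodes does not depend on the $\mathcal{B}$-seed set.
   Context: Com-IC model. Let $G=(V,E,p)$ be a directed graph with $p:E\to[0,1]$ and $N^-(v)$ the in-neighbours of $v$. Two items $\mathcal{A},\mathcal{B}$; GAPs $\mathbf{Q}=(q_{\mathcal{A}|\emptyset},q_{\mathcal{A}|\mathcal{B}},q_{\mathcal{B}|\emptyset},q_{\mathcal{B}|\mathcal{A}})\in[0,1]^4$. Given seed sets $S_\mathcal{A},S_\mathcal{B}\subseteq V$, randomness: each edge $(u,v)$ independently live w.p. $p(u,v)$; each node $v$ independently draws $\alpha^v_\mathcal{A},\alpha^v_\mathcal{B}$ uniform on $[0,1]$, a uniformly random permutation $\pi_v$ of $N^-(v)$, and a fair coin $\tau_v\in\{\mathcal{A},\mathcal{B}\}$. For each item $X$ each node is $X$-idle, $X$-suspended, $X$-adopted or $X$-rejected; initially all idle. At step $0$ nodes of $S_\mathcal{A}$ become $\mathcal{A}$-adopted and nodes of $S_\mathcal{B}$ become $\mathcal{B}$-adopted (order for nodes in both given by $\tau_v$). At step $t\ge1$, $v$ is informed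 of $X$ by in-neighbour $u$ if $(u,v)$ is live and $u$ adopted $X$ at step $t-1$; informing in-neighbours are processed in order $\pi_v$ (an in-neighbour that adopted both items is processed for both, in its adoption order). When $v$ is informed of $X$ ($Y$ the other item) while $X$-idle: if $Y$-adopted, $v$ becomes $X$-adopted if $\alpha^v_X\le q_{X|Y}$, else $X$-rejected; otherwise $X$-adopted if $\alpha^v_X\le q_{X|\emptyset}$, else $X$-suspended. Informing a non-$X$-idle node of $X$ has no effect. Reconsideration: when an $X$-suspended node becomes $Y$-adopted, it becomes $X$-adopted if $\alpha^v_X\le q_{X|Y}$, else $X$-rejected. The process stops when nothing changes. *)

From mathcomp Require Import all_boot.
From Stdlib Require Import Reals.
From Stdlib Require Import ClassicalEpsilon.

Set Implicit Arguments.
Unset Strict Implicit.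
Unset Printing Implicit Defensive.

Inductive item := IA | IB.
Inductive status := Idle | Susp | Adpt | Rej.

Definition other (X : item) : item := match X with IA => IB | IB => IA end.

Record GAP := mkGAP { qA0 : R; qAB : R; qB0 : R; qBA : R }.

Definition q_cond (Q : GAP) (X : item) : R :=
  match X with IA => qAB Q | IB => qBA Q end.
Definition q_none (Q : GAP) (X : item) : R :=
  match X with IA => qA0 Q | IB => qB0 Q end.

Definition getS (X : item) (s : status * status) : status :=
  match X with IA => s.1 | IB => s.2 end.
Definition setS (X : item) (x : status) (s : status * status) : status * status :=
  match X with IA => (x, s.2) | IB => (s.1, x) end.

Record Omega (V : finType) := mkOmega {
  live  : V -> V -> bool;
  piO   : V -> seq V;            (* pi_v : ordering of the in-neighbours of v *)
  tauO  : V -> bool;             (* tau_v : true = A first, false = B first *)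
  alA   : V -> R;
  alB   : V -> R
}.

Definition alpha (V : finType) (om : Omega V) (X : item) (v : V) : R :=
  match X with IA => alA om v | IB => alB om v end.

(* node v becomes X-adopted (from local statuses ss, with the list acc of
   items adopted by v so far in the current step); includes the
   reconsideration rule for a Y-suspended node. *)
Definition becomes_adopted (V : finType) (Q : GAP) (om : Omega V) (v : V)
    (X : item) (ss : status * status) (acc : seq item)
    : (status * status) * seq item :=
  let ss1 := setS X Adpt ss in
  let acc1 := rcons acc X in
  let Y := other X in
  match getS Y ss1 with
  | Susp => if Rle_dec (alpha om Y v) (q_cond Q Y)
            then (setS Y Adpt ss1, rcons acc1 Y)
            else (setS Y Rej ss1, acc1)
  | _ => (ss1, acc1)
  end.

Definition inform (V : finType) (Q : GAP) (om : Omega V) (v : V) (X : item)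
    (st : (status * status) * seq item) : (status * status) * seq item :=
  let: (ss, acc) := st in
  match getS X ss with
  | Idle =>
      match getS (other X) ss with
      | Adpt => if Rle_dec (alpha om X v) (q_cond Q X)
                then becomes_adopted Q om v X ss acc
                else (setS X Rej ss, acc)
      | _ => if Rle_dec (alpha om X v) (q_none Q X)
             then becomes_adopted Q om v X ss acc
             else (setS X Susp ss, acc)
      end
  | _ => st
  end.

(* global state: statuses of every node, and for every node the list (in
   order) of the items it adopted at the previous step *)
Record State (V : finType) := mkState {
  sts   : V -> status * status;
  newly : V -> seq item
}.

Definition init_state (V : finType) (om : Omega V) (SA SB : {set V}) : State V :=
  mkState
    (fun v => (if v \in SA then Adpt else Idle, if v \in SB then Adpt else Idle))
    (fun v => if (v \in SA) && (v \in SB) then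
                (if tauO om v then [:: IA; IB] else [:: IB; IA])
              else if v \in SA then [:: IA]
              else if v \in SB then [:: IB] else [::]).

Definition step (V : finType) (Q : GAP) (om : Omega V) (st : State V) : State V :=
  let events v := flatten [seq (if live om u v then newly st u else [::]) | u <- piO om v] in
  let r v := foldl (fun a X => inform Q om v X a) (sts st v, [::]) (events v) in
  mkState (fun v => (r v).1) (fun v => (r v).2).

Definition state_at (V : finType) (Q : GAP) (om : Omega V) (SA SB : {set V}) (t : nat)
    : State V := iter t (step Q om) (init_state om SA SB).

Definition stopped (V : finType) (Q : GAP) (om : Omega V) (SA SB : {set V}) (t : nat) : Prop :=
  forall v, sts (state_at Q om SA SB t.+1) v = sts (state_at Q om SA SB t) v.

Definition final_adopted (V : finType) (Q : GAP) (om : Omega V) (SA SB : {set V})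
    (X : item) (v : V) : Prop :=
  exists t, stopped Q om SA SB t /\ getS X (sts (state_at Q om SA SB t) v) = Adpt.

Definition final_set_is (V : finType) (Q : GAP) (om : Omega V) (SA SB : {set V})
    (X : item) (T : {set V}) : Prop :=
  forall v, v \in T <-> final_adopted Q om SA SB X v.

Definition indic (P : Prop) : R :=
  if excluded_middle_informative P then 1%R else 0%R.

(* Riemann integral over [0,1], totalised to 0 for non-integrable f *)
Definition Int01 (f : R -> R) : R :=
  match excluded_middle_informative (exists pr : Riemann_integrable f 0 1, True) with
  | left H => RiemannInt (proj1_sig (constructive_indefinite_description _ H))
  | right _ => 0%R
  end.

Definition sumR (T : Type) (f : T -> R) (s : seq T) : R :=
  foldr (fun x acc => (f x + acc)%R) 0%R s.

Definition upd (T : eqType) (U : Type) (f : T -> U) (x : T) (y : U) : T -> U :=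
  fun z => if z == x then y else f z.

Definition in_nbrs (V : finType) (E : rel V) (v : V) : seq V :=
  [seq u <- enum V | E u v].

Definition edges (V : finType) (E : rel V) : seq (V * V) :=
  [seq e <- enum {: V * V} | E e.1 e.2].

(* each edge (u,v) independently live with probability p u v *)
Fixpoint E_edges (V : finType) (p : V -> V -> R) (es : seq (V * V))
    (k : (V -> V -> bool) -> R) (lv : V -> V -> bool) : R :=
  match es with
  | [::] => k lv
  | e :: es' =>
      (p e.1 e.2 * E_edges p es' k (fun a b => if (a, b) == e then true else lv a b)
       + (1 - p e.1 e.2) * E_edges p es' k (fun a b => if (a, b) == e then false else lv a b))%R
  end.

Fixpoint E_pi (V : finType) (E : rel V) (vs : seq V)
    (k : (V -> seq V) -> R) (pi : V -> seq V) : R :=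
  match vs with
  | [::] => k pi
  | v :: vs' =>
      let P := permutations (in_nbrs E v) in
      (/ INR (size P) * sumR (fun s => E_pi E vs' k (upd pi v s)) P)%R
  end.

Fixpoint E_tau (V : finType) (vs : seq V) (k : (V -> bool) -> R) (tau : V -> bool) : R :=
  match vs with
  | [::] => k tau
  | v :: vs' => (/ 2 * E_tau vs' k (upd tau v true) + / 2 * E_tau vs' k (upd tau v false))%R
  end.

(* each alpha_v uniform on [0,1] (iterated integral) *)
Fixpoint E_unif (V : finType) (vs : seq V) (k : (V -> R) -> R) (a : V -> R) : R :=
  match vs with
  | [::] => k a
  | v :: vs' => Int01 (fun x => E_unif vs' k (upd a v x))
  end.

Definition Expect (V : finType) (E : rel V) (p : V -> V -> R) (f : Omega V -> R) : R :=
  E_edges p (edges E) (fun lv =>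
  E_pi E (enum V) (fun pi =>
  E_tau (enum V) (fun tau =>
  E_unif (enum V) (fun aA =>
  E_unif (enum V) (fun aB => f (mkOmega lv pi tau aA aB))
    (fun _ => 0%R)) (fun _ => 0%R)) (fun _ => false)) (fun _ => [::])) (fun _ _ => false).

Definition Pr_final (V : finType) (E : rel V) (p : V -> V -> R) (Q : GAP)
    (SA SB : {set V}) (X : item) (T : {set V}) : R :=
  Expect E p (fun om => indic (final_set_is Q om SA SB X T)).

Definition GAP_valid (Q : GAP) : Prop :=
  (0 <= qA0 Q <= 1 /\ 0 <= qAB Q <= 1 /\ 0 <= qB0 Q <= 1 /\ 0 <= qBA Q <= 1)%R.

From mathcomp Require Import all_boot zify.
From Stdlib Require Import Reals Lra Classical FunctionalExtensionality PropExtensionality.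

Set Implicit Arguments.
Unset Strict Implicit.
Unset Printing Implicit Defensive.

(* When q_{X|Y} = q_{X|0}, the response of a node to X ignores its Y-status:
   the first time it is informed of X it adopts iff alpha_X <= q_{X|0};
   otherwise it is rejected at once or suspended, and a suspended node rejects X
   when it reconsiders.  Hence the X-part of the state (X undecided / adopted /
   not adopted, and whether X was adopted at the last step) evolves by a rule
   that never looks at Y, and for EVERY realisation of the randomness two runs
   whose X-seeds agree end with the same set of X-adopted nodes.  The process
   does stop, because the total rank of the statuses strictly increases at every
   step that changes something. *)

Definition item_eqb (X Z : item) : bool :=
  match X, Z with IA, IA | IB, IB => true | _, _ => false end.

Definition status_rank (s : status) : nat :=
  match s with Idle => 0 | Susp => 1 | Adpt | Rej => 2 end.

Definition rank (ss : status * status) : nat := status_rank ss.1 + status_rank ss.2.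

Section Termination.
Variables (V : finType) (Q : GAP) (om : Omega V).

Definition inform_all (v : V) (evs : seq item) st :=
  foldl (fun a Z => inform Q om v Z a) st evs.

Lemma inform_all_cons v Z evs st :
  inform_all v (Z :: evs) st = inform_all v evs (inform Q om v Z st).
Proof. by []. Qed.

Definition informed_items (st : State V) (v : V) : seq item :=
  flatten [seq (if live om u v then newly st u else [::]) | u <- piO om v].

Lemma step_sts st v :
  sts (step Q om st) v = (inform_all v (informed_items st v) (sts st v, [::])).1.
Proof. by []. Qed.

Lemma step_newly st v :
  newly (step Q om st) v = (inform_all v (informed_items st v) (sts st v, [::])).2.
Proof. by []. Qed.

Lemma inform_rank Z v ss acc : let r := inform Q om v Z (ss, acc) in
  (r.1 = ss \/ rank ss < rank r.1) /\ rank ss + size r.2 <= rank r.1 + size acc.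
Proof.
rewrite /rank; case: Z; case: ss => [[] []]; rewrite /= /becomes_adopted /=;
  repeat case: Rle_dec => /= _; rewrite ?size_rcons; split; by [left | right; lia | lia].
Qed.

Lemma inform_all_rank v evs ss acc : let r := inform_all v evs (ss, acc) in
  (r.1 = ss \/ rank ss < rank r.1) /\ rank ss + size r.2 <= rank r.1 + size acc.
Proof.
elim: evs ss acc => [|Z evs IH] ss acc; first by split; [left | rewrite /=; lia].
rewrite inform_all_cons; case E: (inform Q om v Z (ss, acc)) => [ss1 acc1].
have := inform_rank Z v ss acc; rewrite E /= => -[H1 H2].
have [G1 G2] := IH ss1 acc1; split; last by lia.
by case: G1 => [->|G1]; case: H1 => [<-|H1]; [left | right; lia..].
Qed.

Lemma step_rank st v :
  rank (sts st v) + size (newly (step Q om st) v) <= rank (sts (step Q om st) v).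
Proof.
rewrite step_sts step_newly.
by case: (inform_all_rank v (informed_items st v) (sts st v) [::]) => _ /=; rewrite addn0.
Qed.

Lemma step_rank_lt st v :
  sts (step Q om st) v <> sts st v -> rank (sts st v) < rank (sts (step Q om st) v).
Proof.
by rewrite step_sts; have [[]] := inform_all_rank v (informed_items st v) (sts st v) [::].
Qed.

Lemma step_newly_nil st v : sts (step Q om st) v = sts st v -> newly (step Q om st) v = [::].
Proof. by move=> E; have := step_rank st v; rewrite E; case: newly => //= *; lia. Qed.

Lemma state_atS SA SB t : state_at Q om SA SB t.+1 = step Q om (state_at Q om SA SB t).
Proof. by []. Qed.

(* A stopped state has adopted nothing new, so the next step informs nobody. *)
Lemma stoppedS SA SB t : stopped Q om SA SB t -> stopped Q om SA SB t.+1.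
Proof.
move=> Hs v; rewrite (state_atS _ _ t.+1).
have : forall u, newly (state_at Q om SA SB t.+1) u = [::] by move=> u; apply/step_newly_nil/Hs.
move: (state_at Q om SA SB t.+1) => st Hnil; rewrite step_sts (_ : informed_items _ v = [::]) //.
by rewrite /informed_items; elim: (piO om v) => //= u s ->; rewrite Hnil; case: live.
Qed.

Lemma stopped_le SA SB t t' : t <= t' -> stopped Q om SA SB t -> stopped Q om SA SB t'.
Proof. by move/subnK <-; elim: (t' - t) => //= k IH /IH; exact: stoppedS. Qed.

Definition total_rank SA SB t : nat := \sum_(v : V) rank (sts (state_at Q om SA SB t) v).

Lemma total_rank_le SA SB t : total_rank SA SB t <= 4 * #|V|.
Proof.
rewrite mulnC -sum_nat_const; apply: leq_sum => v _.
by rewrite /rank; case: (sts _ v) => [[] []].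
Qed.

Lemma total_rank_lt SA SB t :
  ~ stopped Q om SA SB t -> total_rank SA SB t < total_rank SA SB t.+1.
Proof.
move=> /not_all_ex_not[v Hv]; rewrite /total_rank (state_atS SA SB t).
rewrite (bigD1 v isT) [X in _ < X](bigD1 v isT) -addSn.
apply: leq_add; first exact: step_rank_lt.
by apply: leq_sum => u _; apply: leq_trans (step_rank _ u); exact: leq_addr.
Qed.

Lemma exists_stopped SA SB : exists t, stopped Q om SA SB t.
Proof.
apply: NNPP => Hn.
have Hgrow t : t <= total_rank SA SB t.
  elim: t => // t IH; have := total_rank_lt (t := t) (fun H => Hn (ex_intro _ t H)); lia.
by have := Hgrow (4 * #|V|).+1; have := total_rank_le SA SB (4 * #|V|).+1; lia.
Qed.

End Termination.

Definition fate (s : status) : option bool :=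
  match s with Idle => None | Adpt => Some true | Susp | Rej => Some false end.

Definition settle (informed adopts : bool) (f : option bool) : option bool :=
  if f is Some _ then f else if informed then Some adopts else None.

Section XProjection.
Variables (V : finType) (Q : GAP) (om : Omega V) (X : item).
Hypothesis qX : q_cond Q X = q_none Q X.

Definition adopts (v : V) : bool :=
  if Rle_dec (alpha om X v) (q_none Q X) then true else false.

(* With q_{X|Y} = q_{X|0}, this invariant makes reconsideration of X reject it. *)
Definition susp_above (v : V) (ss : status * status) : Prop :=
  getS X ss = Susp -> (q_none Q X < alpha om X v)%R.

Lemma inform_fate Z v ss acc : susp_above v ss ->
  let r := inform Q om v Z (ss, acc) in
  [/\ susp_above v r.1,
      fate (getS X r.1) = settle (item_eqb X Z) (adopts v) (fate (getS X ss)) &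
      has (item_eqb X) r.2 =
        has (item_eqb X) acc || (fate (getS X ss) == None) && (fate (getS X r.1) == Some true)].
Proof.
move: qX; rewrite /susp_above /adopts; case: X => /= qX';
  case: Z; case: ss => [[] []]; rewrite /= /becomes_adopted /= ?has_rcons /=;
  repeat (case: Rle_dec => /= ?; rewrite ?has_rcons /=);
  rewrite ?orbF ?orbT // => Hs; split=> //;
  by [lra | move=> _; lra | have := Hs erefl; lra].
Qed.

Lemma inform_all_fate v evs ss acc : susp_above v ss ->
  let r := inform_all Q om v evs (ss, acc) in
  [/\ susp_above v r.1,
      fate (getS X r.1) = settle (has (item_eqb X) evs) (adopts v) (fate (getS X ss)) &
      has (item_eqb X) r.2 =
        has (item_eqb X) acc || (fate (getS X ss) == None) && (fate (getS X r.1) == Some true)].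
Proof.
elim: evs ss acc => [|Z evs IH] ss acc Hs.
  by split=> //; case: (fate _) => [[]|]; rewrite /= ?orbF.
rewrite inform_all_cons; case E: (inform Q om v Z (ss, acc)) => [ss1 acc1].
have := inform_fate Z acc Hs; rewrite E /= => -[H1 H2 H3].
have [G1 G2 G3] := IH ss1 acc1 H1; split=> //; rewrite ?G3 ?H3 G2 H2.
  by case: (fate _) => [?|]; case: (item_eqb X Z); case: (has _ evs); case: (adopts v).
by case: (fate _) => [?|]; case: (item_eqb X Z); case: (has _ evs); case: (adopts v);
  case: (has _ acc).
Qed.

Definition susp_inv (st : State V) : Prop := forall v, susp_above v (sts st v).

Lemma step_susp_inv st : susp_inv st -> susp_inv (step Q om st).
Proof.
by move=> H v; rewrite step_sts; case: (inform_all_fate (informed_items om st v) [::] (H v)).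
Qed.

Lemma state_at_susp_inv SA SB t : susp_inv (state_at Q om SA SB t).
Proof.
elim: t => [|t IH]; last exact: step_susp_inv.
by move=> v; rewrite /susp_above /=; case: X; case: (v \in SA); case: (v \in SB).
Qed.

Lemma step_fate st v : susp_inv st ->
  fate (getS X (sts (step Q om st) v)) =
    settle (has (item_eqb X) (informed_items om st v)) (adopts v) (fate (getS X (sts st v))).
Proof.
by move=> H; rewrite step_sts; case: (inform_all_fate (informed_items om st v) [::] (H v)).
Qed.

Lemma step_newly_has st v : susp_inv st ->
  has (item_eqb X) (newly (step Q om st) v) =
    (fate (getS X (sts st v)) == None) && (fate (getS X (sts (step Q om st) v)) == Some true).
Proof.
move=> H; rewrite step_newly step_sts.
by case: (inform_all_fate (informed_items om st v) [::] (H v)).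
Qed.

(* All that the X-dynamics of the next step depends on. *)
Definition xequiv (st1 st2 : State V) : Prop := forall v,
  fate (getS X (sts st1 v)) = fate (getS X (sts st2 v)) /\
  has (item_eqb X) (newly st1 v) = has (item_eqb X) (newly st2 v).

Lemma informed_items_has st1 st2 v : xequiv st1 st2 ->
  has (item_eqb X) (informed_items om st1 v) = has (item_eqb X) (informed_items om st2 v).
Proof.
move=> H; rewrite /informed_items; elim: (piO om v) => //= u s IH.
by rewrite !has_cat IH; case: live => //; rewrite (H u).2.
Qed.

Lemma step_xequiv st1 st2 : susp_inv st1 -> susp_inv st2 ->
  xequiv st1 st2 -> xequiv (step Q om st1) (step Q om st2).
Proof.
move=> I1 I2 H v.
have Hfate : fate (getS X (sts (step Q om st1) v)) = fate (getS X (sts (step Q om st2) v)).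
  by rewrite !step_fate // (informed_items_has v H) (H v).1.
by split=> //; rewrite !step_newly_has // Hfate (H v).1.
Qed.

Lemma fate_adopted s : fate s = Some true <-> s = Adpt.
Proof. by case: s. Qed.

Lemma fate_settled SA SB v t t' b : t <= t' ->
  fate (getS X (sts (state_at Q om SA SB t) v)) = Some b ->
  fate (getS X (sts (state_at Q om SA SB t') v)) = Some b.
Proof.
move/subnK <-; elim: (t' - t) => // k IH /IH Hk.
by rewrite addSn state_atS step_fate ?Hk //; exact: state_at_susp_inv.
Qed.

Lemma final_adoptedE SA SB v :
  final_adopted Q om SA SB X v <->
  exists t, fate (getS X (sts (state_at Q om SA SB t) v)) = Some true.
Proof.
split=> [[t [_ /fate_adopted Ht]]|[t Ht]]; first by exists t.
have [t0 H0] := exists_stopped Q om SA SB.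
exists (maxn t t0); split; first exact: stopped_le (leq_maxr t t0) H0.
by apply/fate_adopted; exact: fate_settled (leq_maxl t t0) Ht.
Qed.

Lemma final_set_is_xequiv SA SB SA' SB' T :
  xequiv (init_state om SA SB) (init_state om SA' SB') ->
  final_set_is Q om SA SB X T <-> final_set_is Q om SA' SB' X T.
Proof.
move=> H0.
have Ht t : xequiv (state_at Q om SA SB t) (state_at Q om SA' SB' t).
  by elim: t => // t IH; apply: step_xequiv => //; exact: state_at_susp_inv.
have Hv v : final_adopted Q om SA SB X v <-> final_adopted Q om SA' SB' X v.
  by rewrite !final_adoptedE; split=> -[t]; exists t; rewrite ?(Ht t v).1 // -(Ht t v).1.
by split=> H v; rewrite H Hv.
Qed.

End XProjection.

Definition seeds (V : finType) (X : item) (SA SB : {set V}) : {set V} :=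
  match X with IA => SA | IB => SB end.

Lemma init_state_xequiv (V : finType) X (om : Omega V) SA SB SA' SB' :
  seeds X SA SB = seeds X SA' SB' -> xequiv X (init_state om SA SB) (init_state om SA' SB').
Proof.
case: X => /= -> v; split=> //=.
- by case: (v \in SA'); case: (v \in SB); case: (v \in SB'); case: tauO.
- by case: (v \in SA); case: (v \in SA'); case: (v \in SB'); case: tauO.
Qed.

Lemma Pr_final_seeds (V : finType) (E : rel V) p Q X SA SB SA' SB' T :
  q_cond Q X = q_none Q X -> seeds X SA SB = seeds X SA' SB' ->
  Pr_final E p Q SA SB X T = Pr_final E p Q SA' SB' X T.
Proof.
move=> qX Hseeds; rewrite /Pr_final; congr (Expect E p _).
apply: functional_extensionality => om; congr indic.
exact/propositional_extensionality/final_set_is_xequiv/init_state_xequiv.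
Qed.

(* The coupling is pointwise in the randomness. *)
Theorem lemma3 (V : finType) (E : rel V) (p : V -> V -> R) (Q : GAP) :
  (forall u v, E u v -> (0 <= p u v <= 1)%R) ->
  GAP_valid Q ->
  (qBA Q = qB0 Q ->
     forall (SB SA SA' : {set V}) (T : {set V}),
       Pr_final E p Q SA SB IB T = Pr_final E p Q SA' SB IB T) /\
  (qAB Q = qA0 Q ->
     forall (SA SB SB' : {set V}) (T : {set V}),
       Pr_final E p Q SA SB IA T = Pr_final E p Q SA SB' IA T).
Proof.
move=> _ _; split=> [qB SB SA SA' T | qA SA SB SB' T].
- exact: (@Pr_final_seeds _ _ _ _ IB).
- exact: (@Pr_final_seeds _ _ _ _ IA).
Qed.
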